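(* There is an absolute constant $c>0$ such that for every star celebrity game $\Gamma=\langle V,(w_u)_{u\in V},\alpha,\beta\rangle$ with $\beta>1$ and $W=\sum_{u\in V}w_u$, $PoA(\Gamma)\le c\,W/\alpha$.
   Context: A celebrity game $\Gamma=\langle V,(w_u)_{u\in V},\alpha,\beta\rangle$ consists of a set of players $V=\{1,\dots,n\}$, celebrity weights $w_u>0$, a link cost $\alpha>0$ and a critical distance $\beta$ with $1\le\beta\le n-1$. A strategy of player $u$ is a set $S_u\subseteq V\setminus\{u\}$; a strategy profile is $S=(S_1,\dots,S_n)$; its outcome graph $G[S]$ is the undirected graph on $V$ with edge set $\{\{u,v\}: u\in S_v\text{ or }v\in S_u\}$. With $d_G$ the graph distance (infinite between different connected components), the cost of player $u$ is $c_u(S)=\alpha|S_u|+\sum_{v:\,d_{G[S]}(u,v)>\beta}w_v$ and the social cost is $C(S)=\sum_{u\in V}c_u(S)$. $S$ is a Nash equilibrium (NE) if no player can strictly decrease its cost by changing only its own strategy. $\mathrm{opt}(\Gamma)=\min_S C(S)$ and $PoA(\Gamma)=\max_{S\text{ NE}}C(S)/\mathrm{opt}(\Gamma)$. $\Gamma$ is a star celebrity game if $G[S]$ is connected for some NE $S$. *)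

From HB Require Import structures.
From mathcomp Require Import all_boot all_order all_algebra.
Set Implicit Arguments. Unset Strict Implicit. Unset Printing Implicit Defensive.
Import Order.TTheory GRing.Theory Num.Theory.
Local Open Scope ring_scope.

Definition profile (n : nat) := {ffun 'I_n -> {set 'I_n}}.

Definition valid n (S : profile n) : bool := [forall u, u \notin S u].

Definition adj n (S : profile n) : rel 'I_n :=
  fun u v => (v \in S u) || (u \in S v).

Definition dist_le n (S : profile n) (u v : 'I_n) (k : nat) : bool :=
  [exists m : 'I_k.+1, [exists p : (m : nat).-tuple 'I_n,
     path (adj S) u p && (last u p == v)]].

Definition connected_outcome n (S : profile n) : Prop :=
  forall u v : 'I_n, connect (adj S) u v.

Section Game.
Variables (R : realFieldType) (n : nat) (w : 'I_n -> R) (alpha : R) (beta : nat).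

Definition cost (S : profile n) (u : 'I_n) : R :=
  alpha * (#|S u|)%:R + \sum_(v | ~~ dist_le S u v beta) w v.

Definition social_cost (S : profile n) : R := \sum_u cost S u.

Definition deviate (S : profile n) (u : 'I_n) (T : {set 'I_n}) : profile n :=
  [ffun v => if v == u then T else S v].

Definition is_NE (S : profile n) : bool :=
  valid S && [forall u, forall T : {set 'I_n},
     (u \notin T) ==> (cost S u <= cost (deviate S u T) u)].

Definition empty_profile : profile n := [ffun => set0].

(* opt = min over all strategy profiles (the empty profile is one of them) *)
Definition opt : R :=
  \big[Num.min/social_cost empty_profile]_(S : profile n | valid S) social_cost S.

(* PoA = max over NE of C(S)/opt (all ratios are >= 0) *)
Definition PoA : R :=
  \big[Num.max/0]_(S : profile n | is_NE S) (social_cost S / opt).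

Definition star_game : Prop :=
  exists S : profile n, is_NE S /\ connected_outcome S.

End Game.

From Pilot Require Import Defs.
From HB Require Import structures.
From mathcomp Require Import all_boot all_order all_algebra.
From mathcomp Require Import ring lra zify.
Set Implicit Arguments. Unset Strict Implicit. Unset Printing Implicit Defensive.
Import Order.TTheory GRing.Theory Num.Theory.
Local Open Scope ring_scope.

(** Deviating to the empty strategy shows that every player of an equilibrium
    pays at most [W], so an equilibrium costs at most [n W].  In a star game
    some equilibrium buys a link, and its buyer's refusal to drop it gives
    [alpha <= W].  Then every profile costs at least [alpha (n - 1) / 2]: each
    of the [k] isolated players pays at least [W - w u], while the [n - k]
    others are covered by at most twice the number of bought links.  Hence the
    price of anarchy is at most [2 n W / (alpha (n - 1)) <= 4 W / alpha]. *)

Lemma ler_sum_subpred (R : numDomainType) (I : finType) (P Q : pred I)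
    (F : I -> R) :
  (forall i, 0 <= F i) -> (forall i, P i -> Q i) ->
  \sum_(i | P i) F i <= \sum_(i | Q i) F i.
Proof.
move=> F_ge0 PQ; rewrite [leLHS]big_mkcond [leRHS]big_mkcond /=.
apply: ler_sum => i _; case: (boolP (P i)) => [/PQ -> // | _].
by case: (Q i).
Qed.

Lemma sum_card_set_swap (T U : finType) (r : T -> U -> bool) :
  (\sum_(x : T) #|[set y | r x y]| = \sum_(y : U) #|[set x | r x y]|)%N.
Proof.
have cardE (V : finType) (p : pred V) : #|[set v | p v]| = (\sum_v p v)%N.
  by rewrite -sum1dep_card big_mkcond.
under eq_bigr do rewrite cardE.
by rewrite exchange_big; under eq_bigr do rewrite -cardE.
Qed.

Section Profiles.
Variable n : nat.
Implicit Types S : profile n.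

Lemma valid_empty_profile : valid (empty_profile n).
Proof. by apply/forallP => u; rewrite ffunE in_set0. Qed.

Lemma connected_outcome_link S : (1 < n)%N -> connected_outcome S ->
  exists u v, v \in S u.
Proof.
move=> n_gt1 S_conn.
pose x := Ordinal (ltnW n_gt1); pose y := Ordinal n_gt1.
case/connectP: (S_conn x y) => [[|z p] /= xp y_last].
  by move/(congr1 val): y_last.
by case/andP: xp => /orP[xz | zx] _; [exists x, z | exists z, x].
Qed.

Definition isolated S u := (S u == set0) && [forall x, u \notin S x].

Lemma isolated_dist_le S u v k : isolated S u -> dist_le S u v k -> v = u.
Proof.
case/andP=> /eqP Su0 /forallP uS /existsP[m /existsP[[[|z p] _]]] /=.
  by move/eqP.
by rewrite /adj Su0 in_set0 (negbTE (uS z)).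
Qed.

Lemma card_nonisolated S :
  (#|[set u | ~~ isolated S u]| <= 2 * \sum_u #|S u|)%N.
Proof.
have linked u : ~~ isolated S u -> (0 < #|S u| + #|[set x | u \in S x]|)%N.
  rewrite negb_and negb_forall addn_gt0 card_gt0 => /orP[-> // | /existsP[x]].
  by rewrite negbK => uSx; apply/orP; right; apply/card_gt0P; exists x; rewrite inE.
have swap : (\sum_u #|S u| = \sum_u #|[set x | u \in S x]|)%N.
  rewrite -(sum_card_set_swap (fun x u => u \in S x)).
  by apply: eq_bigr => x _; apply: eq_card => u; rewrite inE.
rewrite -sum1dep_card mul2n -addnn {2}swap -big_split /=.
rewrite [leqRHS](bigID (isolated S)) /=.
by apply: leq_trans (leq_addl _ _); apply: leq_sum => u /linked.
Qed.

End Profiles.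

Lemma isolated_tradeoff (R : realFieldType) (alpha W n k m links far : R) :
  0 < alpha -> alpha <= W -> 0 <= far -> k = 0 \/ 1 <= k -> k + m = n ->
  m <= 2 * links -> k * W - W <= far ->
  alpha * (n - 1) <= 2 * (alpha * links + far).
Proof. by move=> ? ? ? [-> | k_ge1] <- ? ?; nra. Qed.

Lemma cost_ratio_le (R : realFieldType) (alpha W n C o : R) :
  0 < alpha -> 0 <= W -> 2 <= n -> alpha * (n - 1) / 2 <= o -> C <= n * W ->
  C / o <= 4%:R * W / alpha.
Proof.
move=> alpha_gt0 W_ge0 n_ge2 o_ge C_le.
have o_gt0 : 0 < o by apply: lt_le_trans o_ge; apply: divr_gt0 => //; nra.
rewrite ler_pdivrMr //; apply: le_trans C_le _.
apply: le_trans (_ : 2 * W * (n - 1) <= _); first by nra.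
have -> : 2 * W * (n - 1) = 4%:R * W / alpha * (alpha * (n - 1) / 2).
  by field; rewrite gt_eqF.
by rewrite ler_wpM2l // divr_ge0 ?mulr_ge0 // ltW.
Qed.

Section Game.
Variables (R : realFieldType) (n : nat) (w : 'I_n -> R) (alpha : R) (beta : nat).
Hypotheses (w_gt0 : forall u, 0 < w u) (alpha_gt0 : 0 < alpha).
Implicit Types (S : profile n) (T : {set 'I_n}).

Local Notation W := (\sum_(v < n) w v).
Local Notation far_weight S u := (\sum_(v | ~~ dist_le S u v beta) w v).
Local Notation cost := (cost w alpha beta).
Local Notation social_cost := (social_cost w alpha beta).

Lemma w_ge0 u : 0 <= w u. Proof. exact: ltW. Qed.

Lemma far_weight_ge0 S u : 0 <= far_weight S u.
Proof. by apply: sumr_ge0 => v _; apply: w_ge0. Qed.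

Lemma far_weight_le S u : far_weight S u <= W.
Proof. by apply: ler_sum_subpred => // v; apply: w_ge0. Qed.

Lemma cost_deviate S u T :
  cost (deviate S u T) u = alpha * #|T|%:R + far_weight (deviate S u T) u.
Proof. by rewrite /Defs.cost ffunE eqxx. Qed.

Lemma NE_cost_le_deviate S u T : is_NE w alpha beta S -> u \notin T ->
  cost S u <= cost (deviate S u T) u.
Proof. by case/andP=> _ /forallP/(_ u)/forallP/(_ T)/implyP. Qed.

Lemma NE_cost_le S u : is_NE w alpha beta S -> cost S u <= W.
Proof.
move=> S_NE; apply: le_trans (NE_cost_le_deviate S_NE (negbT (in_set0 u))) _.
by rewrite cost_deviate cards0 mulr0 add0r far_weight_le.
Qed.

Lemma NE_social_cost_le S : is_NE w alpha beta S -> social_cost S <= n%:R * W.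
Proof.
move=> S_NE; have -> : n%:R * W = \sum_(u < n) W.
  by rewrite sumr_const card_ord mulr_natl.
by apply: ler_sum => u _; apply: NE_cost_le.
Qed.

Lemma star_game_alpha_le : (1 < n)%N -> star_game w alpha beta -> alpha <= W.
Proof.
move=> n_gt1 [S [S_NE /(connected_outcome_link n_gt1)[u [v vSu]]]].
have uS : u \notin S u :\ v.
  by case/andP: S_NE => /forallP/(_ u) uSu _; rewrite in_setD (negbTE uSu) andbF.
have := NE_cost_le_deviate S_NE uS.
rewrite cost_deviate /Defs.cost [#|S u|](cardsD1 v) vSu natrD mulrDr mulr1.
have := far_weight_ge0 S u; have := far_weight_le (deviate S u (S u :\ v)) u.
lra.
Qed.

Lemma isolated_far_weight S u :
  isolated S u -> W - w u <= far_weight S u.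
Proof.
move=> u_iso; rewrite (bigD1 u) //= addrC addrK.
apply: ler_sum_subpred w_ge0 _ => v vu; apply/negP => /isolated_dist_le.
by move/(_ u_iso)/eqP; rewrite (negbTE vu).
Qed.

Lemma social_cost_ge S : alpha <= W -> alpha * (n%:R - 1) / 2 <= social_cost S.
Proof.
move=> alpha_le_W; pose I := [set u | isolated S u].
have costE : social_cost S = alpha * (\sum_u #|S u|%:R) + \sum_u far_weight S u.
  by rewrite /Defs.social_cost /Defs.cost big_split /= mulr_sumr.
rewrite ler_pdivrMr // [_ * 2]mulrC costE.
apply: (@isolated_tradeoff _ _ W _ #|I|%:R #|~: I|%:R) => //.
- by apply: sumr_ge0 => u _; apply: far_weight_ge0.
- by case: (posnP #|I|) => [-> | I_gt0]; [left | right; rewrite ler1n].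
- by rewrite -natrD cardsC card_ord.
- rewrite -natr_sum -natrM ler_nat (eq_card (B := [set u | ~~ isolated S u])).
    exact: card_nonisolated.
  by move=> u; rewrite !inE.
- have : \sum_(u in I) (W - w u) <= \sum_u far_weight S u.
    apply: le_trans (_ : \sum_(u in I) far_weight S u <= _).
      by apply: ler_sum => u; rewrite inE; apply: isolated_far_weight.
    by apply: ler_sum_subpred => // u; apply: far_weight_ge0.
  have : \sum_(u in I) w u <= W by apply: ler_sum_subpred => // u; apply: w_ge0.
  by rewrite sumrB sumr_const -mulr_natl; lra.
Qed.

Lemma opt_ge b : (forall S, valid S -> b <= social_cost S) -> b <= opt w alpha beta.
Proof.
move=> b_le; rewrite /opt; apply: (big_ind (fun x => b <= x)) => //.
- exact/b_le/valid_empty_profile.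
- by move=> x y bx b_y; rewrite le_min bx b_y.
Qed.

Lemma PoA_le B : 0 <= B ->
  (forall S, is_NE w alpha beta S -> social_cost S / opt w alpha beta <= B) ->
  PoA w alpha beta <= B.
Proof.
move=> B_ge0 NE_le; rewrite /PoA; apply: (big_ind (fun x => x <= B)) => //.
by move=> x y xB yB; rewrite ge_max xB yB.
Qed.

End Game.

Theorem lemma1 :
  exists c : nat, (0 < c)%N /\
  forall (R : realFieldType) (n : nat) (w : 'I_n -> R) (alpha : R) (beta : nat),
    (forall u, 0 < w u) -> 0 < alpha ->
    (1 <= beta <= n.-1)%N -> (1 < beta)%N ->
    star_game w alpha beta ->
    PoA w alpha beta <= c%:R * (\sum_(u < n) w u) / alpha.
Proof.
exists 4%N; split=> // R n w alpha beta w_gt0 alpha_gt0 /andP[_ beta_le] beta_gt1 star.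
have n_gt1 : (1 < n)%N by lia.
have W_ge0 : 0 <= \sum_(u < n) w u by apply: sumr_ge0 => u _; apply: ltW.
have alpha_le_W := star_game_alpha_le w_gt0 n_gt1 star.
have opt_lb := opt_ge (fun S _ => social_cost_ge beta w_gt0 alpha_gt0 S alpha_le_W).
apply: PoA_le => [|S S_NE]; first by rewrite divr_ge0 ?mulr_ge0 // ltW.
have n_ge2 : 2 <= n%:R :> R by rewrite ler_nat.
exact: (cost_ratio_le alpha_gt0 W_ge0 n_ge2 opt_lb (NE_social_cost_le w_gt0 S_NE)).
Qed.
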